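(* Let $E,F,H$ be normed spaces over $\mathbb K$ with $H$ spherically complete. Let $f\colon E\to F$ be an immediate linear isometry and $g\colon E\to H$ a linear isometry. Then there exists a linear isometry $h\colon F\to H$ with $h\circ f=g$.
   Context: $\mathbb K$: nontrivially normed field with ultrametric absolute value; normed space over $\mathbb K$: normed vector space with $\|x+y\|\le\max(\|x\|,\|y\|)$. For $x\in F$ and a subspace $V$, $x\perp_m V$ means $\|x\|=\inf_{v\in V}\|x-v\|$. A linear isometry $f\colon E\to F$ is immediate if the only $v\in F$ with $v\perp_m \operatorname{Im}(f)$ is $v=0$. Spherically complete: every decreasing sequence of closed balls (radii $\ge0$) has nonempty intersection. *)

From HB Require Import structures.
From mathcomp Require Import all_boot all_order all_algebra.
From mathcomp Require Import classical_sets reals.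
Set Implicit Arguments. Unset Strict Implicit. Unset Printing Implicit Defensive.
Import Order.TTheory GRing.Theory Num.Theory.
Local Open Scope ring_scope.
Local Open Scope classical_set_scope.

Definition ultra_abs (K : fieldType) (R : realType) (a : K -> R) : Prop :=
  [/\ forall x, 0 <= a x,
      forall x, a x = 0 <-> x = 0,
      forall x y, a (x * y) = a x * a y
    & forall x y, a (x + y) <= Num.max (a x) (a y)].

Definition nontrivial_abs (K : fieldType) (R : realType) (a : K -> R) : Prop :=
  exists x : K, a x <> 0 /\ a x <> 1.

Definition ultra_norm (K : fieldType) (R : realType) (a : K -> R)
    (V : lmodType K) (n : V -> R) : Prop :=
  [/\ forall x, 0 <= n x,
      forall x, n x = 0 <-> x = 0,
      forall (c : K) x, n (c *: x) = a c * n x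
    & forall x y, n (x + y) <= Num.max (n x) (n y)].

Definition norm_isometry (K : fieldType) (R : realType) (V W : lmodType K)
    (nV : V -> R) (nW : W -> R) (f : V -> W) : Prop :=
  forall x, nW (f x) = nV x.

Definition perp_m (K : fieldType) (R : realType) (V : lmodType K)
    (n : V -> R) (x : V) (S : set V) : Prop :=
  n x = inf [set n (x - v) | v in S].

Definition immediate (K : fieldType) (R : realType) (V W : lmodType K)
    (nW : W -> R) (f : V -> W) : Prop :=
  forall v : W, perp_m nW v (range f) -> v = 0.

Definition closed_ball (K : fieldType) (R : realType) (V : lmodType K)
    (n : V -> R) (c : V) (r : R) : set V := [set x | n (x - c) <= r].

Definition spherically_complete (K : fieldType) (R : realType) (V : lmodType K)
    (n : V -> R) : Prop :=
  forall (c : nat -> V) (r : nat -> R),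
    (forall k, 0 <= r k) ->
    (forall k, closed_ball n (c k.+1) (r k.+1) `<=` closed_ball n (c k) (r k)) ->
    exists x, forall k, closed_ball n (c k) (r k) x.

From HB Require Import structures.
From mathcomp Require Import all_boot all_order all_algebra.
From mathcomp Require Import boolp classical_sets reals.
From mathcomp Require Import lra.
Import Order.TTheory GRing.Theory Num.Theory.
Set Implicit Arguments. Unset Strict Implicit. Unset Printing Implicit Defensive.
Local Open Scope ring_scope.
Local Open Scope classical_set_scope.

(* Zorn's lemma yields a maximal isometric linear extension, recorded through
   its graph Γ ⊆ F × H.  If its domain missed some x, then x would have no
   nearest point in the domain: a nearest point u would make x - u ⊥_m Im f,
   which immediacy forbids.  Hence the distances ||x - u|| decrease towards
   their infimum without attaining it, and the balls B(h u, ||x - u||) along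
   a minimizing sequence are nested; spherical completeness gives a point y in
   all of them, and the ultrametric inequality forces ||y - h u|| = ||x - u||
   for every u, so that x ↦ y extends h isometrically, against maximality. *)

Section UltraNorm.
Variables (R : realType) (K : fieldType) (a : K -> R) (V : lmodType K) (n : V -> R).
Hypotheses (ha : ultra_abs a) (hn : ultra_norm a n).

Lemma abs1 : a 1 = 1.
Proof.
case: ha => _ a_eq0 aM _.
have a11 := aM 1 1; rewrite mulr1 in a11.
have a1_neq0 : a 1 <> 0 by move/a_eq0/eqP; rewrite oner_eq0.
have : a 1 * (a 1 - 1) = 0 by rewrite mulrBr mulr1 -a11 subrr.
by move/eqP; rewrite mulf_eq0 subr_eq0 => /orP[/eqP|/eqP].
Qed.

Lemma absN1 : a (-1) = 1.
Proof.
case: ha => a_ge0 _ aM _.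
have := aM (-1) (-1); rewrite mulrNN mulr1 abs1.
by have := a_ge0 (-1); nra.
Qed.

Lemma norm_ge0 x : 0 <= n x. Proof. by case: hn. Qed.

Lemma norm_eq0 x : n x = 0 <-> x = 0. Proof. by case: hn. Qed.

Lemma normZ c x : n (c *: x) = a c * n x. Proof. by case: hn. Qed.

Lemma normD_le x y : n (x + y) <= Num.max (n x) (n y). Proof. by case: hn. Qed.

Lemma normN x : n (- x) = n x.
Proof. by rewrite -scaleN1r normZ absN1 mul1r. Qed.

Lemma distC x y : n (x - y) = n (y - x).
Proof. by rewrite -normN opprB. Qed.

Lemma dist_le_max x y z : n (x - z) <= Num.max (n (x - y)) (n (y - z)).
Proof. by have := normD_le (x - y) (y - z); rewrite addrA subrK. Qed.

Lemma normD_ltr x y : n x < n y -> n (x + y) = n y.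
Proof.
move=> lt_xy; apply/eqP; rewrite eq_le; apply/andP; split.
  by have := normD_le x y; rewrite (max_idPr (ltW lt_xy)).
have := normD_le (x + y) (- x); rewrite addrC addKr normN.
by rewrite le_max => /orP[//|]; rewrite leNgt lt_xy.
Qed.

End UltraNorm.

Lemma descending_minimizing_seq (R : realType) (T : Type) (S : set T) (phi : T -> R) :
  S !=set0 -> (forall t, 0 <= phi t) ->
  (forall t, S t -> exists2 t', S t' & phi t' < phi t) ->
  exists s : nat -> T, [/\ forall k, S (s k), forall k, phi (s k.+1) <= phi (s k)
    & forall t, S t -> exists k, phi (s k) < phi t].
Proof.
move=> [t0 St0] phi_ge0 no_min.
have img_ne : phi @` S !=set0 by exists (phi t0), t0.
pose d := inf (phi @` S).
have d_lt t : S t -> d < phi t.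
  move=> St; have [t' St' lt_t't] := no_min t St; apply: le_lt_trans lt_t't.
  by apply: ge_inf; [exists 0 => _ [? _ <-]; apply: phi_ge0 | exists t'].
have /choice [next nextP] : forall kt : nat * T, exists t', S kt.2 ->
    [/\ S t', phi t' <= phi kt.2 & phi t' < d + kt.1.+1%:R^-1].
  move=> [k t] /=; have [St|] := pselect (S t); last by exists t.
  have : d < Num.min (phi t) (d + k.+1%:R^-1).
    by rewrite lt_min d_lt //= ltrDl invr_gt0 ltr0n.
  move/(inf_lt img_ne) => [_ [t' St' <-]]; rewrite lt_min => /andP[lt_t lt_d].
  by exists t' => _; split => //; apply: ltW.
pose s := fix s k := if k is k'.+1 then next (k', s k') else t0.
have Ss k : S (s k) by elim: k => //= k IH; have [] := nextP (k, s k) IH.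
exists s; split => // [k | t St]; first by have [] := nextP (k, s k) (Ss k).
have eps_gt0 : 0 < phi t - d by rewrite subr_gt0 d_lt.
pose k := Num.bound (phi t - d)^-1.
have bound_k : (phi t - d)^-1 < k%:R by apply: archi_boundP; rewrite ltW ?invr_gt0.
have inv_lt : k.+1%:R^-1 < phi t - d.
  by rewrite invf_plt ?posrE ?ltr0n // (lt_trans bound_k) // ltr_nat.
exists k.+1; have [_ _ /lt_trans] := nextP (k, s k) (Ss k); apply.
by rewrite -ltrBrDl.
Qed.

Section ExtendIsometryByOnePoint.
Variables (R : realType) (K : fieldType) (a : K -> R) (V W : lmodType K)
  (nV : V -> R) (nW : W -> R).
Hypotheses (ha : ultra_abs a) (hV : ultra_norm a nV) (hW : ultra_norm a nW).
Variables (S : set (V * W)) (x : V).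
Hypothesis S_iso : forall p q, S p -> S q -> nW (p.2 - q.2) = nV (p.1 - q.1).
Hypothesis S_no_nearest :
  forall p, S p -> exists2 q, S q & nV (x - q.1) < nV (x - p.1).

Let r (p : V * W) := nV (x - p.1).

Lemma closed_ball_nearer p q : S p -> S q -> r q <= r p ->
  closed_ball nW q.2 (r q) `<=` closed_ball nW p.2 (r p).
Proof.
move=> Sp Sq le_rqp z; rewrite /closed_ball /= => zq.
apply: le_trans (dist_le_max hW z q.2 p.2) _.
rewrite ge_max (le_trans zq le_rqp) /= S_iso //.
apply: le_trans (dist_le_max hV q.1 x p.1) _.
by rewrite ge_max (distC ha hV q.1) le_rqp lexx.
Qed.

Lemma exists_center_within_radii : spherically_complete nW -> S !=set0 ->
  exists y, forall p, S p -> nW (y - p.2) <= r p.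
Proof.
move=> hsc S_ne.
have [s [Ss s_dec s_min]] :=
  descending_minimizing_seq S_ne (fun p => norm_ge0 hV _) S_no_nearest.
have [y y_in] : exists y, forall k, closed_ball nW (s k).2 (r (s k)) y.
  apply: hsc => [k|k]; first exact: norm_ge0 hV _.
  exact: closed_ball_nearer (Ss k) (Ss k.+1) (s_dec k).
exists y => p Sp; have [k lt_k] := s_min p Sp.
exact: closed_ball_nearer (Ss k) (ltW lt_k) _ (y_in k).
Qed.

Lemma center_at_radii y : (forall p, S p -> nW (y - p.2) <= r p) ->
  forall p, S p -> nW (y - p.2) = r p.
Proof.
move=> y_within p Sp; have [q Sq lt_rqp] := S_no_nearest Sp.
have dist_qp : nV (q.1 - p.1) = r p.
  by rewrite -(subrK x q.1) -addrA (normD_ltr ha hV) // (distC ha hV q.1).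
rewrite -(subrK q.2 y) -addrA (normD_ltr ha hW) S_iso //.
by rewrite dist_qp; apply: le_lt_trans (y_within q Sq) lt_rqp.
Qed.

Lemma extend_isometry_by_point : spherically_complete nW -> S !=set0 ->
  exists y, forall p, S p -> nW (y - p.2) = nV (x - p.1).
Proof.
move=> hsc S_ne; have [y y_within] := exists_center_within_radii hsc S_ne.
by exists y; apply: center_at_radii.
Qed.

End ExtendIsometryByOnePoint.

Lemma immediate_no_nearest (R : realType) (K : fieldType) (E F : lmodType K)
    (nF : F -> R) (f : {linear E -> F}) (G : set F) (x : F) :
  immediate nF f -> (forall u e, G u -> G (u + f e)) -> ~ G x ->
  forall u, G u -> exists2 u', G u' & nF (x - u') < nF (x - u).
Proof.
move=> himm G_shift Gx u Gu.
have [//|nearest] := pselect (exists2 u', G u' & nF (x - u') < nF (x - u)).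
have le_shift e : nF (x - u) <= nF (x - u - f e).
  rewrite leNgt; apply/negP => lt_e; apply: nearest; exists (u + f e).
    exact: G_shift.
  by rewrite opprD addrA.
have range_f0 : range f 0 by exists 0 => //; rewrite linear0.
exfalso; apply: Gx.
suff /himm /eqP : perp_m nF (x - u) (range f) by rewrite subr_eq0 => /eqP ->.
apply/eqP; rewrite eq_le; apply/andP; split.
  apply: lb_le_inf; first by exists (nF (x - u - 0)), 0.
  by move=> _ [_ [e _ <-] <-]; apply: le_shift.
have lb : has_lbound [set nF (x - u - v) | v in range f].
  by exists (nF (x - u)) => _ [_ [e _ <-] <-]; apply: le_shift.
by apply: ge_inf lb _ _; exists 0; rewrite ?subr0.
Qed.

Definition lincomb_closed (K : fieldType) (V : lmodType K) (S : set V) : Prop :=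
  forall c p q, S p -> S q -> S (c *: p + q).

Section IsometricExtension.
Variables (R : realType) (K : fieldType) (a : K -> R) (E F H : lmodType K)
  (nE : E -> R) (nF : F -> R) (nH : H -> R).
Hypotheses (ha : ultra_abs a) (hF : ultra_norm a nF) (hH : ultra_norm a nH).
Variables (f : {linear E -> F}) (g : {linear E -> H}).
Hypotheses (hf : norm_isometry nE nF f) (hg : norm_isometry nE nH g).

(* The conditions
   are stated so that set0 satisfies them, which makes the empty chain harmless
   in Zorn_bigcup; a nonempty such set is a linear subspace of F * H containing
   the graph of (f, g). *)
Record iso_ext (G : set (F * H)) : Prop := IsoExt {
  iso_ext_closed : lincomb_closed G;
  iso_ext_shift : forall p e, G p -> G (p + (f e, g e));
  iso_ext_norm : forall p, G p -> nH p.2 = nF p.1 }.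

Definition graph_fg : set (F * H) := range (fun e => (f e, g e)).

Lemma iso_ext_graph : iso_ext graph_fg.
Proof.
split.
- move=> c _ _ [e1 _ <-] [e2 _ <-]; exists (c *: e1 + e2) => //.
  by rewrite !linearP.
- by move=> _ e [e1 _ <-]; exists (e1 + e); rewrite ?linearD.
- by move=> _ [e _ <-] /=; rewrite hg hf.
Qed.

Lemma iso_ext_bigcup (C : set (set (F * H))) :
  C `<=` iso_ext -> total_on C subset -> iso_ext (\bigcup_(G in C) G).
Proof.
move=> C_ext C_tot; split.
- move=> c p q [G1 CG1 G1p] [G2 CG2 G2q].
  have [G12|G21] := C_tot _ _ CG1 CG2.
    by exists G2 => //; apply: (iso_ext_closed (C_ext _ CG2)) => //; apply: G12.
  by exists G1 => //; apply: (iso_ext_closed (C_ext _ CG1)) => //; apply: G21.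
- by move=> p e [G CG Gp]; exists G => //; apply: (iso_ext_shift (C_ext _ CG)).
- by move=> p [G CG Gp]; apply: (iso_ext_norm (C_ext _ CG)).
Qed.

Section OneExtension.
Variables (G : set (F * H)) (hG : iso_ext G).

Lemma iso_ext_sub p q : G p -> G q -> G (p - q).
Proof.
by move=> Gp Gq; rewrite addrC -scaleN1r; apply: (iso_ext_closed hG).
Qed.

Lemma iso_ext0 : G !=set0 -> G 0 /\ graph_fg `<=` G.
Proof.
move=> [p Gp]; have G0 : G 0 by rewrite -(subrr p); apply: iso_ext_sub.
by split => // _ [e _ <-]; rewrite -[(f e, g e)]add0r; apply: (iso_ext_shift hG).
Qed.

Lemma iso_ext_dist p q : G p -> G q -> nH (p.2 - q.2) = nF (p.1 - q.1).
Proof. by move=> Gp Gq; apply: (iso_ext_norm hG (iso_ext_sub Gp Gq)). Qed.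

Lemma iso_ext_functional u w w' : G (u, w) -> G (u, w') -> w = w'.
Proof.
move=> Gw Gw'; apply/eqP; rewrite -subr_eq0; apply/eqP/(norm_eq0 hH).
by rewrite (iso_ext_dist Gw Gw') subrr; apply/(norm_eq0 hF).
Qed.

Lemma iso_ext_adjoin x y : G 0 ->
  (forall p, G p -> nH (y - p.2) = nF (x - p.1)) ->
  iso_ext [set p + c *: (x, y) | p in G & c in setT].
Proof.
move=> G0 y_dist; split.
- move=> d _ _ [p1 Gp1 [c1 _ <-]] [p2 Gp2 [c2 _ <-]].
  exists (d *: p1 + p2); first exact: (iso_ext_closed hG).
  by exists (d * c1 + c2) => //; rewrite scalerDr scalerA scalerDl addrACA.
- move=> _ e [p Gp [c _ <-]]; exists (p + (f e, g e)).
    exact: (iso_ext_shift hG).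
  by exists c => //; rewrite addrAC.
- move=> _ [p Gp [c _ <-]] /=.
  have [->|c_neq0] := eqVneq c 0; first by rewrite !scale0r !addr0 (iso_ext_norm hG).
  pose q := - c^-1 *: p.
  have Gq : G q by rewrite -[q]addr0; apply: (iso_ext_closed hG).
  have factor_c (U : lmodType K) (u v : U) : u + c *: v = c *: (v - - c^-1 *: u).
    by rewrite scaleNr opprK scalerDr scalerA mulfV // scale1r addrC.
  rewrite factor_c [X in _ = nF X]factor_c !(normZ hH, normZ hF).
  by congr (_ * _); apply: y_dist Gq.
Qed.

End OneExtension.

Hypothesis himm : immediate nF f.
Hypothesis hsc : spherically_complete nH.

Lemma maximal_iso_ext_total G : iso_ext G -> G !=set0 ->
  (forall G', G `<` G' -> ~ iso_ext G') -> forall x, exists w, G (x, w).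
Proof.
move=> hG G_ne G_max x; apply: contrapT => Gx.
have [G0 _] := iso_ext0 hG G_ne.
pose dom := [set u | exists w, G (u, w)].
have dom_shift u e : dom u -> dom (u + f e).
  by move=> [w Gw]; exists (w + g e); exact: (iso_ext_shift hG e Gw).
have no_nearest p : G p -> exists2 q, G q & nF (x - q.1) < nF (x - p.1).
  move=> Gp; have dom_p : dom p.1 by exists p.2; case: p Gp.
  have [u' [w' Gw'] lt_u'] := immediate_no_nearest himm dom_shift Gx dom_p.
  by exists (u', w').
have [y y_dist] : exists y, forall p, G p -> nH (y - p.2) = nF (x - p.1).
  exact: (extend_isometry_by_point ha hF hH (iso_ext_dist hG) no_nearest hsc G_ne).
apply: (G_max _ _ (iso_ext_adjoin hG G0 y_dist)); split.
  by move=> p Gp; exists p => //; exists 0 => //; rewrite scale0r addr0.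
move=> /(_ (x, y)) G_xy; apply: Gx; exists y; apply: G_xy.
by exists 0 => //; exists 1 => //; rewrite scale1r add0r.
Qed.

Lemma exists_isometric_extension :
  exists h : F -> H, [/\ linear h, norm_isometry nF nH h & forall e, h (f e) = g e].
Proof.
have [G [hG G_max]] := Zorn_bigcup iso_ext_bigcup.
have G_ne : G !=set0.
  apply/set0P/eqP => G0; apply: (G_max graph_fg) iso_ext_graph.
  by rewrite G0; split => // /(_ (f 0, g 0)); apply; exists 0.
have [h G_h] := choice (maximal_iso_ext_total hG G_ne G_max).
have h_unique x w : G (x, w) -> h x = w.
  by move=> Gw; apply: (iso_ext_functional hG (G_h x)).
exists h; split.
- by move=> c u v; apply: h_unique; exact: (iso_ext_closed hG c (G_h u) (G_h v)).
- by move=> u; apply: (iso_ext_norm hG (G_h u)).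
- by move=> e; apply: h_unique; apply: (iso_ext0 hG G_ne).2; exists e.
Qed.

End IsometricExtension.

Theorem lemma6p2 (R : realType) (K : fieldType) (a : K -> R)
  (ha : ultra_abs a) (hnt : nontrivial_abs a)
  (E F H : lmodType K) (nE : E -> R) (nF : F -> R) (nH : H -> R)
  (hE : ultra_norm a nE) (hF : ultra_norm a nF) (hH : ultra_norm a nH)
  (hsc : spherically_complete nH)
  (f : {linear E -> F}) (g : {linear E -> H})
  (hf : norm_isometry nE nF f) (himm : immediate nF f)
  (hg : norm_isometry nE nH g) :
  exists h : {linear F -> H}, norm_isometry nF nH h /\ (forall x, h (f x) = g x).
Proof.
have [h [h_lin h_iso h_ext]] := exists_isometric_extension ha hF hH hf hg himm hsc.
by exists (HB.pack_for {linear F -> H} h (GRing.isLinear.Build K F H *:%R h h_lin)).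
Qed.
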